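(* Let $0 \le \alpha \le \beta < \infty$ with $\alpha + \beta > 0$, and let $\varphi\colon \mathbb{R} \to \mathbb{R}$ satisfy $\alpha \le \frac{\varphi(a) - \varphi(b)}{a - b} \le \beta$ for all $a \neq b$. Let $\phi\colon \mathbb{R}^{n_1} \to \mathbb{R}^{n_1}$, $\phi(v) = (\varphi(v_1),\dots,\varphi(v_{n_1}))$. Let $W \in \mathbb{R}^{n_1 \times n_0}$, $\rho > 0$, and let $T \in \mathbb{R}^{n_1 \times n_1}$ be diagonal and positive definite, such that $$W W^\top \preceq \frac{2\rho}{(\alpha+\beta)^2}\, T^{-1}.$$ Then the map $h\colon \mathbb{R}^{n_0} \to \mathbb{R}^{n_0}$, $$h(x) = \sqrt{\rho}\, x - \frac{\alpha+\beta}{\sqrt{\rho}}\, W^\top T\, \phi(Wx),$$ satisfies $\|h(x) - h(x')\|_2 \le \sqrt{\rho}\,\|x - x'\|_2$ for all $x, x' \in \mathbb{R}^{n_0}$.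
   Context: $\preceq$ denotes the Loewner (positive semidefinite) order on symmetric matrices. *)

(* real matrices over an abstract R : rcfType (needs square roots). *)
From mathcomp Require Import all_boot all_order all_algebra.
Set Implicit Arguments. Unset Strict Implicit. Unset Printing Implicit Defensive.
Import Order.TTheory GRing.Theory Num.Theory.
Local Open Scope ring_scope.

Definition qform (R : rcfType) (n : nat) (A : 'M[R]_n) (v : 'cV[R]_n) : R :=
  (v^T *m A *m v) 0 0.

Definition psd (R : rcfType) (n : nat) (A : 'M[R]_n) : Prop :=
  A^T = A /\ forall v : 'cV[R]_n, 0 <= qform A v.

Definition posdef (R : rcfType) (n : nat) (A : 'M[R]_n) : Prop :=
  A^T = A /\ forall v : 'cV[R]_n, v != 0 -> 0 < qform A v.

Definition loewner_le (R : rcfType) (n : nat) (A B : 'M[R]_n) : Prop :=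
  psd (B - A).

Definition norm2 (R : rcfType) (n : nat) (v : 'cV[R]_n) : R :=
  Num.sqrt (\sum_i v i 0 ^+ 2).

Definition cmap (R : rcfType) (n : nat) (f : R -> R) (v : 'cV[R]_n) : 'cV[R]_n :=
  \col_i f (v i 0).

From mathcomp Require Import all_boot all_order all_algebra.
From mathcomp Require Import ring.
Import Order.TTheory GRing.Theory Num.Theory.
Local Open Scope ring_scope.
Set Implicit Arguments. Unset Strict Implicit.

(* With d = x - x', p = phi(W x) - phi(W x'), q = W^T T p and c = alpha + beta,
   |h x - h x'|^2 = rho |d|^2 - 2 c <W d, T p> + (c^2 / rho) |q|^2.
   The slope bounds give (phi a - phi b)^2 <= c (a - b)(phi a - phi b), so, T being
   diagonal with positive entries, <p, T p> <= c <W d, T p>.  The Loewner hypothesis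
   tested on T p gives |q|^2 <= (2 rho / c^2) <p, T p>, hence the last two terms
   sum to at most 0. *)

Definition vdot (R : rcfType) n (a b : 'cV[R]_n) : R := \sum_i a i 0 * b i 0.

Section InnerProduct.
Variables (R : rcfType) (n : nat).
Implicit Types (a b c : 'cV[R]_n) (k : R).

Lemma vdotC a b : vdot a b = vdot b a.
Proof. by apply: eq_bigr => i _; rewrite mulrC. Qed.

Lemma vdotBl a b c : vdot (a - b) c = vdot a c - vdot b c.
Proof.
by rewrite /vdot -sumrB; apply: eq_bigr => i _; rewrite !mxE mulrBl.
Qed.

Lemma vdotBr a b c : vdot c (a - b) = vdot c a - vdot c b.
Proof. by rewrite vdotC vdotBl vdotC [vdot b c]vdotC. Qed.

Lemma vdotZl k a b : vdot (k *: a) b = k * vdot a b.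
Proof. by rewrite /vdot mulr_sumr; apply: eq_bigr => i _; rewrite !mxE mulrA. Qed.

Lemma vdotZr k a b : vdot a (k *: b) = k * vdot a b.
Proof. by rewrite vdotC vdotZl vdotC. Qed.

Lemma vdot_ge0 a : 0 <= vdot a a.
Proof. by apply: sumr_ge0 => i _; rewrite -expr2 sqr_ge0. Qed.

Lemma qformE (A : 'M[R]_n) a : qform A a = vdot a (A *m a).
Proof. by rewrite /qform -mulmxA !mxE; apply: eq_bigr => i _; rewrite !mxE. Qed.

Lemma norm2E a : norm2 a = Num.sqrt (vdot a a).
Proof. by congr Num.sqrt; apply: eq_bigr => i _; rewrite expr2. Qed.

End InnerProduct.

Lemma vdot_mulmx (R : rcfType) m n (A : 'M[R]_(m, n)) a b :
  vdot (A *m a) b = vdot a (A^T *m b).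
Proof.
rewrite /vdot; under eq_bigr => i _ do rewrite mxE mulr_suml.
rewrite exchange_big /=; apply: eq_bigr => j _.
by rewrite mxE mulr_sumr; apply: eq_bigr => i _; rewrite !mxE mulrCA mulrA.
Qed.

Section DiagonalPosdef.
Variables (R : rcfType) (n : nat) (T : 'M[R]_n).
Hypothesis diagT : is_diag_mx T.

Lemma diag_mulmxE (b : 'cV[R]_n) i : (T *m b) i 0 = T i i * b i 0.
Proof.
move/is_diag_mxP: diagT => dT; rewrite mxE (bigD1 i) //= big1 ?addr0 // => j ji.
by rewrite dT ?mul0r // eq_sym.
Qed.

Lemma vdot_diag a b : vdot a (T *m b) = \sum_i T i i * (a i 0 * b i 0).
Proof. by apply: eq_bigr => i _; rewrite diag_mulmxE mulrCA. Qed.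

Hypothesis posT : posdef T.

Lemma posdef_diag_gt0 i : 0 < T i i.
Proof.
have nz : (delta_mx i 0 : 'cV[R]_n) != 0.
  by apply/negP => /eqP/matrixP/(_ i 0)/eqP; rewrite !mxE !eqxx oner_eq0.
have := posT.2 _ nz; rewrite qformE vdot_diag (bigD1 i) //= big1 ?addr0.
  by rewrite !mxE !eqxx /= !mulr1.
by move=> j ji; rewrite !mxE (negbTE ji) /= !mul0r mulr0.
Qed.

Lemma posdef_diag_unitmx : T \in unitmx.
Proof.
rewrite unitmxE det_trig ?is_diag_mx_is_trig // unitfE gt_eqF //.
by apply: prodr_gt0 => i _; apply: posdef_diag_gt0.
Qed.

End DiagonalPosdef.

Section SlopeRestricted.
Variables (R : rcfType) (alpha beta : R) (varphi : R -> R).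
Hypothesis alpha_ge0 : 0 <= alpha.
Hypothesis slope : forall a b : R, a != b ->
  alpha <= (varphi a - varphi b) / (a - b) <= beta.

Lemma slope_sector a b :
  (varphi a - varphi b) ^+ 2 <= (alpha + beta) * ((a - b) * (varphi a - varphi b)).
Proof.
have [->|neq_ab] := eqVneq a b; first by rewrite !subrr expr0n mul0r mulr0.
have /andP[ge_alpha le_beta] := slope neq_ab.
set s := _ / _ in ge_alpha le_beta.
have -> : varphi a - varphi b = s * (a - b) by rewrite divfK // subr_eq0.
rewrite -subr_ge0.
have -> : (alpha + beta) * ((a - b) * (s * (a - b))) - (s * (a - b)) ^+ 2
    = (a - b) ^+ 2 * (s * (alpha + beta - s)) by ring.
rewrite mulr_ge0 ?sqr_ge0 // mulr_ge0 ?subr_ge0 ?(le_trans alpha_ge0) //.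
by rewrite -[s]add0r lerD.
Qed.

Lemma vdot_cmap_sector n (T : 'M[R]_n) (u v : 'cV[R]_n) :
  is_diag_mx T -> posdef T ->
  vdot (cmap varphi u - cmap varphi v) (T *m (cmap varphi u - cmap varphi v))
  <= (alpha + beta) * vdot (u - v) (T *m (cmap varphi u - cmap varphi v)).
Proof.
move=> dT pT; set p := _ - _; rewrite !vdot_diag // mulr_sumr.
apply: ler_sum => i _; rewrite /p !mxE [_ * (T i i * _)]mulrCA -expr2.
by apply: ler_wpM2l; [exact/ltW/posdef_diag_gt0 | exact: slope_sector].
Qed.

End SlopeRestricted.

Lemma loewner_le_transpose_bound (R : rcfType) m n (W : 'M[R]_(m, n))
    (T : 'M[R]_m) (k : R) (p : 'cV[R]_m) :
  T \in unitmx -> loewner_le (W *m W^T) (k *: invmx T) ->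
  vdot (W^T *m (T *m p)) (W^T *m (T *m p)) <= k * vdot p (T *m p).
Proof.
move=> unitT [_ /(_ (T *m p))]; rewrite qformE mulmxBl vdotBr subr_ge0.
rewrite -scalemxAl vdotZr mulKmx // [vdot _ p]vdotC.
by move=> le_WWT; rewrite vdot_mulmx trmxK mulmxA.
Qed.

Theorem proposition2 (R : rcfType) (n0 n1 : nat) (alpha beta rho : R)
  (varphi : R -> R) (W : 'M[R]_(n1, n0)) (T : 'M[R]_n1) :
  0 <= alpha -> alpha <= beta -> 0 < alpha + beta ->
  (forall a b : R, a != b ->
     alpha <= (varphi a - varphi b) / (a - b) <= beta) ->
  0 < rho ->
  is_diag_mx T -> posdef T ->
  loewner_le (W *m W^T) ((2 * rho / (alpha + beta) ^+ 2) *: invmx T) ->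
  let h := fun x : 'cV[R]_n0 =>
    Num.sqrt rho *: x
    - ((alpha + beta) / Num.sqrt rho) *: (W^T *m T *m cmap varphi (W *m x)) in
  forall x x' : 'cV[R]_n0,
    norm2 (h x - h x') <= Num.sqrt rho * norm2 (x - x').
Proof.
move=> alpha_ge0 _ c_gt0 slope rho_gt0 dT pT loewWT h x x'.
set c := alpha + beta; set s := Num.sqrt rho; set k := c / s.
set d := x - x'; set p := cmap varphi (W *m x) - cmap varphi (W *m x').
set q := W^T *m (T *m p).
set D := vdot d d; set U := vdot d q; set P := vdot p (T *m p).
have s_gt0 : 0 < s by rewrite sqrtr_gt0.
have ss : s * s = rho by rewrite -expr2 sqr_sqrtr ?ltW.
have sk : s * k = c by rewrite /k mulrC divfK // gt_eqF.
have hE : h x - h x' = s *: d - k *: q.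
  rewrite /h /q /p /d !mulmxA mulmxBr.
  by apply/matrixP => i j; rewrite !mxE /k /s /c; ring.
have expand : vdot (s *: d - k *: q) (s *: d - k *: q)
    = rho * D - 2 * c * U + k * k * vdot q q.
  rewrite vdotBl !vdotBr !vdotZl !vdotZr [vdot q d]vdotC -/D -/U -ss -sk; ring.
have sector : P <= c * U.
  rewrite /U [vdot d q]vdotC vdot_mulmx trmxK vdotC (mulmxBr W).
  exact: vdot_cmap_sector.
have kQ : k * k * vdot q q <= 2 * P.
  have := loewner_le_transpose_bound p (posdef_diag_unitmx dT pT) loewWT.
  move/(ler_wpM2l (sqr_ge0 k)); rewrite -expr2 mulrA.
  suff -> : k ^+ 2 * (2 * rho / c ^+ 2) = 2 by [].
  by rewrite /k -ss; field; rewrite !gt_eqF.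
rewrite !norm2E hE /s -sqrtrM ?(ltW rho_gt0) // ler_sqrt; last first.
  by rewrite mulr_ge0 ?vdot_ge0 ?(ltW rho_gt0).
rewrite expand -addrA ler_wnDr // addrC subr_le0 -(mulrA 2).
by apply: le_trans kQ _; rewrite ler_wpM2l.
Qed.
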